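(* For every integer $n\ge 7$ there exists a CDCC graph $\Gamma_n$ with $n$ vertices such that $I(\Gamma_n)^s$ has linear quotients for all $s\ge 2$.
   Context: A finite simple graph $\Gamma$ is a CDCC graph if it is gapfree (for any two disjoint edges $e,e'$ there is an edge meeting both) and contains each of the following as an induced subgraph: a cricket (a vertex adjacent to four other vertices, with exactly one additional edge, joining two of those four), a diamond (the complete graph on four vertices with one edge removed), the $4$-cycle $C_4$, and the $5$-cycle $C_5$. $I(\Gamma)$ is the edge ideal of $\Gamma$ in a polynomial ring over a field with one variable per vertex, generated by the products of the variables of the endpoints of each edge. A monomial ideal generated in a single degree has linear quotients if its minimal monomial generators can be ordered $u_1>\cdots>u_r$ so that each colon ideal $(u_1,\ldots,u_i):u_{i+1}$, $1\le i<r$, is generated by a subset of the variables. *)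

From mathcomp Require Import all_boot.
Set Implicit Arguments. Unset Strict Implicit. Unset Printing Implicit Defensive.

Definition simple_graph (n : nat) (G : rel 'I_n) : Prop :=
  symmetric G /\ irreflexive G.

Definition has_induced (n k : nat) (G : rel 'I_n) (H : rel 'I_k) : Prop :=
  exists f : 'I_k -> 'I_n, injective f /\ forall a b, G (f a) (f b) = H a b.

Definition cricket : rel 'I_5 := fun a b =>
  let x := nat_of_ord a in let y := nat_of_ord b in
  [|| (x == 0) && (y != 0), (y == 0) && (x != 0),
      (x == 1) && (y == 2) | (x == 2) && (y == 1)].
Definition diamond : rel 'I_4 := fun a b =>
  (a != b) && ~~ ((nat_of_ord a == 2) && (nat_of_ord b == 3) ||
                  (nat_of_ord a == 3) && (nat_of_ord b == 2)).
Definition cycle_graph (k : nat) : rel 'I_k := fun a b =>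
  (a != b) && ((b == (a.+1 %% k) :> nat) || (a == (b.+1 %% k) :> nat)).

Definition gapfree (n : nat) (G : rel 'I_n) : Prop :=
  forall a b c d : 'I_n, G a b -> G c d ->
    [&& a != c, a != d, b != c & b != d] ->
    G a c \/ G a d \/ G b c \/ G b d.

Definition CDCC (n : nat) (G : rel 'I_n) : Prop :=
  gapfree G /\ has_induced G cricket /\ has_induced G diamond /\
  has_induced G (@cycle_graph 4) /\ has_induced G (@cycle_graph 5).

Definition mon (n : nat) := {ffun 'I_n -> nat}.
Definition mdvd (n : nat) (a b : mon n) : Prop := forall i, a i <= b i.
Definition mmul (n : nat) (a b : mon n) : mon n := [ffun i => a i + b i].

(* A monomial ideal is represented by the set of monomials it contains
   (a monomial ideal is determined by its monomials). *)
Definition monideal (n : nat) := mon n -> Prop.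

Definition gen_ideal (n : nat) (L : seq (mon n)) : monideal n :=
  fun m => exists2 g, g \in L & mdvd g m.

Definition colon (n : nat) (J : monideal n) (u : mon n) : monideal n :=
  fun m => J (mmul m u).

Definition gen_by_variables (n : nat) (J : monideal n) : Prop :=
  exists S : {set 'I_n}, forall m, J m <-> exists2 k, k \in S & 0 < m k.

Definition min_gen (n : nat) (J : monideal n) (m : mon n) : Prop :=
  J m /\ forall m', J m' -> mdvd m' m -> m' = m.

Definition linear_quotients (n : nat) (J : monideal n) : Prop :=
  exists u : seq (mon n),
    [/\ uniq u, (forall m, m \in u <-> min_gen J m) &
        forall i, 0 < i -> i < size u ->
          gen_by_variables (colon (gen_ideal (take i u)) (nth [ffun=> 0] u i))].

Definition edges_mon (n : nat) (es : seq ('I_n * 'I_n)) : mon n :=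
  [ffun k => \sum_(e <- es) ((e.1 == k) + (e.2 == k))].

Definition edge_ideal_pow (n : nat) (G : rel 'I_n) (s : nat) : monideal n :=
  fun m => exists es : seq ('I_n * 'I_n),
    [/\ size es = s, all (fun e => G e.1 e.2) es & mdvd (edges_mon es) m].

From mathcomp Require Import all_boot all_order zify.
Import Order.TTheory.
Set Implicit Arguments. Unset Strict Implicit. Unset Printing Implicit Defensive.

(** Let Γ_n be the wheel W_5 (hub 0, rim 1-2-3-4-5) in which the rim vertex 2 is
  blown up into n - 5 >= 2 pairwise non-adjacent twins; the twins produce the
  induced cricket, and gapfreeness is inherited from the wheel.

  Summing the exponents of a monomial over each twin class gives its profile,
  a vector indexed by the six wheel vertices.  The products of s edges of Γ_n
  are exactly the monomials whose profile is the degree vector of s wheel edges,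
  which is cut out by a few linear inequalities; these monomials all have degree
  2s, so they are the minimal generators of I(Γ_n)^s.  We list them by
  decreasing key: first a lexicographic key on profiles, then the exponent
  vector itself.  Linear quotients follow once every generator u that comes
  after some g has an exchange u x_l / x_b, with x_l dividing g : u, that comes
  before u.  When the profiles differ, an explicit case analysis on the wheel
  finds the exchange (this is where s >= 2 is used); when they agree, one unit
  of degree moves between two twins. *)

(** * Linear quotients from an exchange property *)

Lemma sorted_strict_key (T : eqType) d (K : orderType d) (key : T -> K) (s : seq T) :
  uniq s -> {in s &, injective key} ->
  sorted (fun x y => (key y <= key x)%O) s -> sorted (fun x y => (key y < key x)%O) s.
Proof.
have trans_ge : transitive (fun x y => (key y <= key x)%O).
  by move=> ? ? ? h1 h2; apply: le_trans h2 h1.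
have trans_gt : transitive (fun x y => (key y < key x)%O).
  by move=> ? ? ? h1 h2; apply: lt_trans h2 h1.
rewrite !sorted_pairwise //.
elim: s => //= x s IH /andP [xs Us] Ik /andP [ge_x ge_s].
rewrite IH // ?andbT; last by move=> y z ys zs; apply: Ik; rewrite inE ?ys ?zs orbT.
apply/allP => y ys; rewrite lt_neqAle (allP ge_x) // andbT.
by apply: contraNneq xs => /Ik eq_yx; rewrite -eq_yx ?inE ?ys ?eqxx ?orbT.
Qed.

Section MonomialIdeals.
Variable n : nat.
Implicit Types (u v w m : mon n) (J : monideal n).

Definition mvar (l : 'I_n) : mon n := [ffun i => nat_of_bool (l == i)].

Definition mshift u (l b : 'I_n) : mon n := [ffun i => u i + (l == i) - (b == i)].

Lemma gen_idealP (L : seq (mon n)) m :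
  reflect (gen_ideal L m) (has (fun g : mon n => [forall i, g i <= m i]) L).
Proof.
apply: (iffP hasP) => [] [g gL gm]; exists g => //; first by move=> i; apply: (forallP gm).
by apply/forallP.
Qed.

Lemma mdvd_trans v u w : mdvd u v -> mdvd v w -> mdvd u w.
Proof. by move=> uv vw i; apply: leq_trans (uv i) (vw i). Qed.

Lemma mdvd_mmul2r u v w : mdvd u v -> mdvd (mmul u w) (mmul v w).
Proof. by move=> uv i; rewrite !ffunE leq_add2r. Qed.

Lemma mshift_dvd u l b : mdvd (mshift u l b) (mmul (mvar l) u).
Proof. by move=> i; rewrite !ffunE addnC leq_subr. Qed.

Lemma eq_sum_leq (I : finType) (v w : I -> nat) :
  (forall i, v i <= w i) -> \sum_i v i = \sum_i w i -> v =1 w.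
Proof.
move=> vw sum_vw i; have [_] := leqif_sum (P := predT) (fun j _ => leqif_eq (vw j)).
by rewrite sum_vw eqxx => /esym/forallP/(_ i)/eqP.
Qed.

Lemma min_gen_equidegree J (P : mon n -> Prop) d :
  (forall m, J m <-> exists2 v, P v & mdvd v m) ->
  (forall v, P v -> \sum_i v i = d) ->
  forall m, min_gen J m <-> P m.
Proof.
move=> defJ degP m; split.
  case=> /defJ [v Pv vm] minm.
  by rewrite -(minm v) //; apply/defJ; exists v.
move=> Pm; split; first by apply/defJ; exists m.
move=> m' /defJ [v Pv vm'] m'm; apply/ffunP => i; apply/eqP.
have vm := mdvd_trans vm' m'm.
have vEm := eq_sum_leq vm (etrans (degP v Pv) (esym (degP m Pm))).
by rewrite eqn_leq m'm /= -(vEm i) vm'.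
Qed.

Lemma linear_quotients_by_key d (K : orderType d) (key : mon n -> K) J (L : seq (mon n)) :
  sorted (fun u v => (key v < key u)%O) L ->
  (forall m, m \in L <-> min_gen J m) ->
  {in L &, forall u g, (key u < key g)%O -> exists2 l : 'I_n, u l < g l &
      colon (gen_ideal [seq w <- L | (key u < key w)%O]) u (mvar l)} ->
  linear_quotients J.
Proof.
move=> sortedL defL exchange.
have trans_gt : transitive (fun u v => (key v < key u)%O).
  by move=> ? ? ? h1 h2; apply: lt_trans h2 h1.
have irr_gt : irreflexive (fun u v => (key v < key u)%O) by move=> ?; exact: ltxx.
have gtL := sorted_ltn_nth trans_gt [ffun=> 0] sortedL.
exists L; split => //; first exact: sorted_uniq sortedL.
move=> i i_gt0 iL; set u := nth _ L i.
have earlierP g : g \in take i L -> g \in L /\ (key u < key g)%O.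
  move=> /(nthP [ffun=> 0]) [j]; rewrite size_take iL => ji <-.
  have jL : j < size L by apply: ltn_trans iL.
  by rewrite nth_take //; split; [exact: mem_nth | exact: gtL].
have earlier_key w : w \in L -> (key u < key w)%O -> w \in take i L.
  move=> /(nthP [ffun=> 0]) [j jL <-] uw.
  have ji : j < i.
    rewrite ltnNge leq_eqVlt; apply/negP => /orP [/eqP ij | ij].
      by move: uw; rewrite /u ij ltxx.
    by move: uw; rewrite /u ltNge ltW ?gtL.
  by rewrite -(nth_take _ ji) mem_nth // size_take iL.
pose S := [set l | has (fun g : mon n => [forall j, g j <= mmul (mvar l) u j]) (take i L)].
exists S => m; split.
  case=> g /earlierP [gL ug] gmu.
  have [l ugl [w]] := exchange u g (mem_nth _ iL) gL ug.
  rewrite mem_filter => /andP [uw wL] wlu.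
  exists l; last by have := gmu l; rewrite ffunE; lia.
  by rewrite inE; apply/gen_idealP; exists w => //; apply: earlier_key.
case=> l; rewrite inE => /gen_idealP [g gi glu] ml.
exists g => //; apply: mdvd_trans glu _; apply: mdvd_mmul2r => j.
by rewrite ffunE; case: eqP => // <-.
Qed.

Definition bounded_mons (d : nat) : seq (mon n) :=
  [seq [ffun i => nat_of_ord (f i)] | f : {ffun 'I_n -> 'I_d.+1} <- enum predT].

Lemma mem_bounded_mons d v : (v \in bounded_mons d) = [forall i, v i <= d].
Proof.
apply/mapP/forallP => [[f _ ->] i | vd]; first by rewrite ffunE -ltnS.
exists [ffun i => Ordinal (vd i : v i < d.+1)]; first by rewrite mem_enum.
by apply/ffunP => i; rewrite !ffunE.
Qed.

Lemma uniq_bounded_mons d : uniq (bounded_mons d).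
Proof.
rewrite map_inj_uniq ?enum_uniq // => f g fg; apply/ffunP => i; apply: val_inj.
by have := congr1 (fun v : mon n => v i) fg; rewrite !ffunE.
Qed.

End MonomialIdeals.

(** * Sums over the fibres of a vertex colouring *)

Section Fibres.
Variables (n : nat) (cls : 'I_n -> nat).

Definition fibre_sum (v : 'I_n -> nat) (c : nat) : nat := \sum_(i < n | cls i == c) v i.

Definition mtuple (v : mon n) : n.-tuplelexi nat := [tuple v i | i < n].

Lemma fibre_sumD (v w : 'I_n -> nat) c :
  fibre_sum (fun i => v i + w i) c = fibre_sum v c + fibre_sum w c.
Proof. exact: big_split. Qed.

Lemma eq_fibre_sum (v w : 'I_n -> nat) c : v =1 w -> fibre_sum v c = fibre_sum w c.
Proof. by move=> vw; apply: eq_bigr => i _. Qed.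

Lemma fibre_sum_delta (a : 'I_n) c : fibre_sum (fun i => a == i) c = (cls a == c).
Proof.
rewrite /fibre_sum big_mkcond (bigD1 a) //= eqxx big1 ?addn0 => [|i ia].
  by case: (cls a == c).
by rewrite [a == i]eq_sym (negbTE ia) if_same.
Qed.

Lemma fibre_sum_ltn (v w : 'I_n -> nat) c :
  fibre_sum w c < fibre_sum v c -> exists2 i, cls i = c & w i < v i.
Proof.
move=> wv; have /exists_inP [i /eqP ic wvi] : [exists (i | cls i == c), w i < v i].
  apply: contraTT wv; rewrite negb_exists_in -leqNgt => /forall_inP vw.
  by apply: leq_sum => i /vw; rewrite -leqNgt.
by exists i.
Qed.

Lemma fibre_sum_gt0 (v : 'I_n -> nat) c :
  0 < fibre_sum v c -> exists2 i, cls i = c & 0 < v i.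
Proof. by move=> v_gt0; apply: fibre_sum_ltn; rewrite [X in X < _]big1. Qed.

Lemma sum_fibre_sums k (v : 'I_n -> nat) : (forall i, cls i < k) ->
  \sum_(i < n) v i = \sum_(c < k) fibre_sum v c.
Proof.
by move=> cls_lt; rewrite (partition_big (fun i => Ordinal (cls_lt i)) xpredT).
Qed.

Lemma fibre_sum_mshift (u : mon n) l b c : 0 < u b ->
  fibre_sum (mshift u l b) c = fibre_sum u c + (cls l == c) - (cls b == c).
Proof.
move=> ub; rewrite -(fibre_sum_delta l) -(fibre_sum_delta b) -fibre_sumD.
rewrite -[X in _ = X - _](eq_fibre_sum (v := fun i => mshift u l b i + (b == i))).
  by rewrite fibre_sumD addnK.
by move=> i; rewrite ffunE; case: eqP => [<-|_]; case: eqP => [<-|_] /=; lia.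
Qed.

Lemma fibre_sum_compensate (v w : 'I_n -> nat) i :
  fibre_sum v (cls i) = fibre_sum w (cls i) -> v i < w i ->
  exists2 k, cls k = cls i & w k < v k.
Proof.
move=> vw vwi; have [k ki wvk] : exists2 k, cls k = cls i & w k < v k + (i == k).
  by apply: fibre_sum_ltn; rewrite fibre_sumD fibre_sum_delta eqxx vw addn1.
by exists k => //; move: wvk; case: eqP => [<-|_]; lia.
Qed.

Lemma mtuple_inj : injective mtuple.
Proof.
move=> u v uv; apply/ffunP => i.
by have := congr1 (fun t : n.-tuple nat => tnth t i) uv; rewrite !tnth_mktuple.
Qed.

Lemma fibre_exchange (u g : mon n) :
  (forall i, fibre_sum u (cls i) = fibre_sum g (cls i)) -> (mtuple u < mtuple g)%O ->
  exists l b, [/\ u l < g l, 0 < u b, cls l = cls b & (mtuple u < mtuple (mshift u l b))%O].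
Proof.
move=> same_sums /ltxi_tuplePlt [j before_j]; rewrite !tnth_mktuple ltEnat => ugj.
have {}before_j (i : 'I_n) : i < j -> u i = g i.
  by move=> ij; have := before_j i ij; rewrite !tnth_mktuple.
have [k kj gku] := fibre_sum_compensate (same_sums j) ugj.
have jk : j < k.
  case: ltngtP => // [/before_j ukEgk | /val_inj jEk]; last by move: gku; rewrite -jEk; lia.
  by move: gku; rewrite ukEgk ltnn.
exists j, k; split => //; first lia.
apply/ltxi_tuplePlt; exists j => [i ij|]; rewrite !tnth_mktuple ffunE.
  by rewrite -!val_eqE /= !gtn_eqF ?(ltn_trans ij jk) // addn0 subn0.
by rewrite eqxx -val_eqE /= gtn_eqF // ltEnat /= addn1 subn0.
Qed.

End Fibres.

(** * Degree profiles of the wheel W_5 *)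

Definition rim_edge (x y : nat) : bool :=
  [|| (x == 1) && (y == 2), (x == 2) && (y == 3), (x == 3) && (y == 4),
      (x == 4) && (y == 5) | (x == 5) && (y == 1)].

Definition wheel_edge (x y : nat) : bool :=
  [|| (x == 0) && (y != 0), (y == 0) && (x != 0), rim_edge x y | rim_edge y x].

Lemma wheel_edge_sym : symmetric wheel_edge.
Proof. by move=> x y; rewrite /wheel_edge; lia. Qed.

Lemma wheel_edge_irr : irreflexive wheel_edge.
Proof. by move=> x; rewrite /wheel_edge /rim_edge; lia. Qed.

(* The degree vector of s wheel edges satisfies these inequalities, since every
  edge meets the hub, and each non-adjacent rim pair, at most once;
  [wheel_profile_peel] gives the converse. *)
Definition wheel_profile (s : nat) (p : nat -> nat) : bool :=
  [&& p 0 + p 1 + p 2 + p 3 + p 4 + p 5 == 2 * s, p 0 <= s,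
      p 1 + p 3 <= s, p 2 + p 4 <= s, p 3 + p 5 <= s, p 4 + p 1 <= s & p 5 + p 2 <= s].

Lemma eq_wheel_profile s p q : p =1 q -> wheel_profile s p = wheel_profile s q.
Proof. by move=> pq; rewrite /wheel_profile !pq. Qed.

Lemma wheel_profile_add_edge s p x y : x < 6 -> y < 6 -> wheel_edge x y ->
  wheel_profile s p -> wheel_profile s.+1 (fun c => p c + (x == c) + (y == c)).
Proof.
by move: x y => [|[|[|[|[|[|x]]]]]] [|[|[|[|[|[|y]]]]]] //= _ _ _; rewrite /wheel_profile /=; lia.
Qed.

Ltac peel_at x y := exists x, y; rewrite /wheel_profile /= ?subn0; lia.

Lemma wheel_profile_peel s p : wheel_profile s.+1 p ->
  exists x y, [&& wheel_edge x y, 0 < p x, 0 < p y &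
                  wheel_profile s (fun c => p c - (x == c) - (y == c))].
Proof.
rewrite /wheel_profile => ps.
case: (posnP (p 0)) => p0.
  case: (ltnP (p 3 + p 5) s.+1) => h1; first by peel_at 1 2.
  case: (ltnP (p 4 + p 1) s.+1) => h2; first by peel_at 2 3.
  case: (ltnP (p 5 + p 2) s.+1) => h3; first by peel_at 3 4.
  case: (ltnP (p 1 + p 3) s.+1) => h4; first by peel_at 4 5.
  case: (ltnP (p 2 + p 4) s.+1) => h5; first by peel_at 5 1.
  lia.
case: (ltnP (p 1 + p 3) s.+1) => t13; last first.
  case: (ltnP (p 4 + p 1) s.+1) => t41; last by peel_at 0 1.
  case: (ltnP (p 3 + p 5) s.+1) => t35; last by peel_at 0 3.
  by case: (posnP (p 1)) => q1; [peel_at 0 3 | peel_at 0 1].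
case: (ltnP (p 4 + p 1) s.+1) => t41; last first.
  case: (ltnP (p 2 + p 4) s.+1) => t24; last by peel_at 0 4.
  by case: (posnP (p 4)) => q4; [peel_at 0 1 | peel_at 0 4].
case: (ltnP (p 2 + p 4) s.+1) => t24; last first.
  case: (ltnP (p 5 + p 2) s.+1) => t52; last by peel_at 0 2.
  by case: (posnP (p 2)) => q2; [peel_at 0 4 | peel_at 0 2].
case: (ltnP (p 3 + p 5) s.+1) => t35; last first.
  case: (ltnP (p 5 + p 2) s.+1) => t52; last by peel_at 0 5.
  by case: (posnP (p 3)) => q3; [peel_at 0 5 | peel_at 0 3].
case: (ltnP (p 5 + p 2) s.+1) => t52; last first.
  by case: (posnP (p 5)) => q5; [peel_at 0 2 | peel_at 0 5].
case: (posnP (p 1)) => q1; last by peel_at 0 1.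
case: (posnP (p 2)) => q2; last by peel_at 0 2.
case: (posnP (p 3)) => q3; last by peel_at 0 3.
case: (posnP (p 4)) => q4; last by peel_at 0 4.
case: (posnP (p 5)) => q5; last by peel_at 0 5.
lia.
Qed.

Definition pshift (p : nat -> nat) (x y : nat) : nat -> nat :=
  fun c => p c + (x == c) - (y == c).

(* Profiles with p 0 = p 1 = p 2 = 0 have p 4 = s and p 3 = s - p 5.  Their fourth
  entry ties p 5 = 0 with p 5 = 1, so they come in the order p 5 = 1, 0, 2, ..., s:
  p 5 = 1 must come first, being the only exchange available from p 5 = 0
  towards profiles with p 0 = p 2 = 0 < p 1. *)
Definition profile_key (s : nat) (p : nat -> nat) : seqlexi nat :=
  if (p 0 == 0) && (p 1 == 0) then
    [:: p 0; p 1; p 2; (if p 2 == 0 then s - (p 5 - 1) else p 3); p 4; p 5]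
  else [:: p 0; p 1; p 2; p 5; p 3; p 4].

Lemma pshift_id p x : pshift p x x =1 p.
Proof. by move=> c; rewrite /pshift addnK. Qed.

Lemma ltxi_seq6 (a0 a1 a2 a3 a4 a5 b0 b1 b2 b3 b4 b5 : nat) :
  (([:: a0; a1; a2; a3; a4; a5] : seqlexi nat) < [:: b0; b1; b2; b3; b4; b5])%O =
  [|| a0 < b0, (a0 == b0) && (a1 < b1), [&& a0 == b0, a1 == b1 & a2 < b2],
      [&& a0 == b0, a1 == b1, a2 == b2 & a3 < b3],
      [&& a0 == b0, a1 == b1, a2 == b2, a3 == b3 & a4 < b4] |
      [&& a0 == b0, a1 == b1, a2 == b2, a3 == b3, a4 == b4 & a5 < b5]].
Proof. by rewrite !ltxi_cons ltxis0 !leEnat; lia. Qed.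

Lemma profile_key_hub s p : ~~ ((p 0 == 0) && (p 1 == 0)) ->
  profile_key s p = [:: p 0; p 1; p 2; p 5; p 3; p 4].
Proof. by rewrite /profile_key => /negbTE ->. Qed.

Lemma profile_key_rim2 s p : p 0 = 0 -> p 1 = 0 -> 0 < p 2 ->
  profile_key s p = [:: p 0; p 1; p 2; p 3; p 4; p 5].
Proof. by rewrite /profile_key => -> -> /lt0n_neq0/negbTE ->. Qed.

Lemma profile_key_rim345 s p : p 0 = 0 -> p 1 = 0 -> p 2 = 0 ->
  profile_key s p = [:: p 0; p 1; p 2; s - (p 5 - 1); p 4; p 5].
Proof. by rewrite /profile_key => -> -> ->. Qed.

Lemma profile_key_head s p : exists a b c, profile_key s p = [:: p 0; p 1; p 2; a; b; c].
Proof. by rewrite /profile_key; case: ifP; do 3 eexists. Qed.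

Lemma eq_profile_key s p q : p =1 q -> profile_key s p = profile_key s q.
Proof. by move=> pq; rewrite /profile_key !pq. Qed.

Lemma profile_key_inj s p q : wheel_profile s p -> wheel_profile s q ->
  profile_key s p = profile_key s q -> forall c, c < 6 -> p c = q c.
Proof.
rewrite /wheel_profile /profile_key => ps qs.
by do 2 case: ifP => [?|/negbT ?]; do 2 (try case: ifP => [?|/negbT ?]);
  case=> ? ? ? ? ? ? [|[|[|[|[|[|c]]]]]] //; lia.
Qed.

Definition profile_exchange (s : nat) (p q : nat -> nat) (x y : nat) : Prop :=
  [/\ p x < q x, 0 < p y, wheel_profile s (pshift p x y) &
      (profile_key s p < profile_key s (pshift p x y))%O].

Ltac shift_at x y :=
  exists x, y;
  first [ rewrite (@profile_key_hub _ (pshift _ x y)); last by rewrite /pshift /=; lia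
        | rewrite (@profile_key_rim2 _ (pshift _ x y)); [| by rewrite /pshift /=; lia ..]
        | rewrite (@profile_key_rim345 _ (pshift _ x y)); [| by rewrite /pshift /=; lia ..] ];
  split; rewrite /pshift /wheel_profile /= ?ltxi_seq6 ?subn0 ?addn0; lia.

Lemma profile_exchange_hub s p q : wheel_profile s p -> wheel_profile s q ->
  ~~ ((p 0 == 0) && (p 1 == 0)) -> (profile_key s p < profile_key s q)%O ->
  exists x y, profile_exchange s p q x y.
Proof.
move=> ps qs p_hub; rewrite /profile_exchange (profile_key_hub s p_hub) => pq.
move: ps qs; rewrite /wheel_profile => ps qs.
case: (boolP ((q 0 == 0) && (q 1 == 0))) => q_hub.
  by move: pq; have [a [b [c ->]]] := profile_key_head s q; rewrite ltxi_seq6; lia.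
rewrite (profile_key_hub s q_hub) ltxi_seq6 in pq.
case: (ltnP (p 0) (q 0)) => h0.
  case: (posnP (p 1)) => y1; last by shift_at 0 1.
  case: (posnP (p 2)) => y2; last by shift_at 0 2.
  case: (posnP (p 3)) => y3; last by shift_at 0 3.
  case: (posnP (p 4)) => y4; last by shift_at 0 4.
  case: (posnP (p 5)) => y5; last by shift_at 0 5.
  lia.
case: (ltnP (p 1) (q 1)) => h1.
  case: (ltnP (p 1 + p 3) s) => t13; case: (ltnP (p 4 + p 1) s) => t41.
  - case: (posnP (p 2)) => y2; last by shift_at 1 2.
    case: (posnP (p 3)) => y3; last by shift_at 1 3.
    case: (posnP (p 4)) => y4; last by shift_at 1 4.
    case: (posnP (p 5)) => y5; last by shift_at 1 5.
    lia.
  - by shift_at 1 4.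
  - by shift_at 1 3.
  - by case: (ltnP (p 2) (q 2)) => h2; [shift_at 2 4 | shift_at 5 3].
case: (ltnP (p 2) (q 2)) => h2.
  case: (ltnP (p 2 + p 4) s) => t24; case: (ltnP (p 5 + p 2) s) => t52.
  - case: (posnP (p 3)) => y3; last by shift_at 2 3.
    case: (posnP (p 4)) => y4; last by shift_at 2 4.
    case: (posnP (p 5)) => y5; last by shift_at 2 5.
    lia.
  - by shift_at 2 5.
  - by shift_at 2 4.
  - by shift_at 3 4.
case: (ltnP (p 5) (q 5)) => h5.
  case: (ltnP (p 3 + p 5) s) => t35; last by shift_at 5 3.
  by case: (posnP (p 3)) => y3; [shift_at 5 4 | shift_at 5 3].
by case: (ltnP (p 3) (q 3)) => h3; [shift_at 3 4 | lia].
Qed.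

Lemma profile_exchange_rim2 s p q : wheel_profile s p -> wheel_profile s q ->
  p 0 = 0 -> p 1 = 0 -> 0 < p 2 -> (profile_key s p < profile_key s q)%O ->
  exists x y, profile_exchange s p q x y.
Proof.
move=> ps qs p0 p1 p2; rewrite /profile_exchange (profile_key_rim2 s p0 p1 p2) => pq.
move: ps qs; rewrite /wheel_profile => ps qs.
case: (boolP ((q 0 == 0) && (q 1 == 0))) => [/andP [/eqP q0 /eqP q1] | q_hub].
  case: (posnP (q 2)) => q2.
    by move: pq; rewrite (profile_key_rim345 s q0 q1 q2) ltxi_seq6; lia.
  rewrite (profile_key_rim2 s q0 q1 q2) ltxi_seq6 in pq.
  case: (ltngtP (p 2) (q 2)) => h2; [| lia |].
    case: (ltnP (p 2 + p 4) s) => t24; case: (ltnP (p 5 + p 2) s) => t52.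
    - case: (posnP (p 3)) => y3; last by shift_at 2 3.
      case: (posnP (p 4)) => y4; last by shift_at 2 4.
      case: (posnP (p 5)) => y5; last by shift_at 2 5.
      lia.
    - by shift_at 2 5.
    - by shift_at 2 4.
    - by shift_at 3 5.
  case: (ltnP (p 3) (q 3)) => h3.
    case: (ltnP (p 3 + p 5) s) => t35; last by shift_at 3 5.
    by case: (posnP (p 4)) => y4; [shift_at 3 5 | shift_at 3 4].
  by case: (ltnP (p 4) (q 4)) => h4; [shift_at 4 5 | lia].
case: (posnP (q 0)) => q0; last by shift_at 0 2.
case: (ltnP (p 3) s) => t3; last by shift_at 1 3.
by case: (ltnP (p 4) s) => t4; [shift_at 1 2 | shift_at 1 4].
Qed.

Lemma profile_exchange_rim345 s p q : 2 <= s -> wheel_profile s p -> wheel_profile s q ->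
  p 0 = 0 -> p 1 = 0 -> p 2 = 0 -> (profile_key s p < profile_key s q)%O ->
  exists x y, profile_exchange s p q x y.
Proof.
move=> s2 ps qs p0 p1 p2; rewrite /profile_exchange (profile_key_rim345 s p0 p1 p2) => pq.
move: ps qs; rewrite /wheel_profile => ps qs.
case: (boolP ((q 0 == 0) && (q 1 == 0))) => [/andP [/eqP q0 /eqP q1] | q_hub].
  case: (posnP (q 2)) => q2.
    rewrite (profile_key_rim345 s q0 q1 q2) ltxi_seq6 in pq.
    by case: (posnP (p 5)) => p5; [shift_at 5 3 | shift_at 3 5].
  by case: (ltnP (p 5 + p 2) s) => t52; [shift_at 2 4 | shift_at 3 5].
case: (posnP (q 0)) => q0; last by shift_at 0 4.
case: (ltnP (p 3) s) => t3; first by shift_at 1 4.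
by case: (posnP (q 2)) => q2; [shift_at 5 3 | shift_at 2 4].
Qed.

Lemma exists_profile_exchange s p q : 2 <= s -> wheel_profile s p -> wheel_profile s q ->
  (profile_key s p < profile_key s q)%O ->
  exists x y, profile_exchange s p q x y.
Proof.
move=> s2 ps qs pq.
case: (boolP ((p 0 == 0) && (p 1 == 0))) => [/andP [/eqP p0 /eqP p1] | p_hub].
  case: (posnP (p 2)) => p2; first exact: profile_exchange_rim345 s2 ps qs p0 p1 p2 pq.
  exact: profile_exchange_rim2 ps qs p0 p1 p2 pq.
exact: profile_exchange_hub ps qs p_hub pq.
Qed.

(** * The blown-up wheel *)

(* The twins 5, ..., n - 1 all lie over the rim vertex 2. *)
Definition wheel_class (i : nat) : nat :=
  match i with 0 => 0 | 1 => 1 | 2 => 3 | 3 => 4 | 4 => 5 | _ => 2 end.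

Definition blown_wheel (n : nat) : rel 'I_n :=
  fun a b => wheel_edge (wheel_class a) (wheel_class b).

Lemma wheel_class_lt6 i : wheel_class i < 6.
Proof. by case: i => [|[|[|[|[|i]]]]]. Qed.


Lemma blown_wheel_simple n : simple_graph (@blown_wheel n).
Proof. by split=> [a b | a]; rewrite /blown_wheel ?wheel_edge_irr // wheel_edge_sym. Qed.

Lemma wheel_gapfree_upto_twins x y z w : x < 6 -> y < 6 -> z < 6 -> w < 6 ->
  wheel_edge x y -> wheel_edge z w ->
  [&& (x == z) ==> (x == 2), (x == w) ==> (x == 2),
      (y == z) ==> (y == 2) & (y == w) ==> (y == 2)] ->
  [|| wheel_edge x z, wheel_edge x w, wheel_edge y z | wheel_edge y w].
Proof. by move: x y z w; do 4![case=> [|[|[|[|[|[|?]]]]]] //]. Qed.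

Lemma wheel_class_inj i j : wheel_class i = wheel_class j -> wheel_class i != 2 -> i = j.
Proof. by case: i => [|[|[|[|[|i]]]]]; case: j => [|[|[|[|[|j]]]]]. Qed.

Lemma blown_wheel_gapfree n : gapfree (@blown_wheel n).
Proof.
move=> a b c d ab cd /and4P [ac ad bc bd].
have twins (i j : 'I_n) : i != j -> (wheel_class i == wheel_class j) ==> (wheel_class i == 2).
  move=> ij; apply/implyP => /eqP cij; apply: contraNT ij => ci2.
  by apply/eqP/val_inj/(wheel_class_inj cij).
have := wheel_gapfree_upto_twins (wheel_class_lt6 a) (wheel_class_lt6 b)
  (wheel_class_lt6 c) (wheel_class_lt6 d) ab cd.
by rewrite !twins // => /(_ isT) /or4P [] ?; auto.
Qed.

Lemma blown_wheel_induced n k (H : rel 'I_k) (l : seq nat) :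
  7 <= n -> size l = k -> uniq l -> all (fun i => i < 7) l ->
  (forall a b : 'I_k, wheel_edge (wheel_class (nth 0 l a)) (wheel_class (nth 0 l b)) = H a b) ->
  has_induced (@blown_wheel n) H.
Proof.
move=> n7 lk ul l7 lH.
have lt_n (a : 'I_k) : nth 0 l a < n.
  by apply: leq_trans n7; apply: (allP l7); rewrite mem_nth // lk.
exists (fun a => Ordinal (lt_n a)); split => // a b /(congr1 val) /= /eqP.
by rewrite nth_uniq ?lk // => /eqP; apply: val_inj.
Qed.

Lemma blown_wheel_CDCC n : 7 <= n -> CDCC (@blown_wheel n).
Proof.
move=> n7; split; first exact: blown_wheel_gapfree.
split; first apply: (blown_wheel_induced (l := [:: 0; 3; 4; 5; 6])) => //.
  by do 2![case=> [[|[|[|[|[|?]]]]] ?]].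
split; first apply: (blown_wheel_induced (l := [:: 0; 1; 5; 4])) => //.
  by do 2![case=> [[|[|[|[|?]]]] ?]].
split; first apply: (blown_wheel_induced (l := [:: 5; 1; 6; 2])) => //.
  by do 2![case=> [[|[|[|[|?]]]] ?]].
apply: (blown_wheel_induced (l := [:: 1; 5; 2; 3; 4])) => //.
by do 2![case=> [[|[|[|[|[|?]]]]] ?]].
Qed.

Lemma edges_mon_nil n : edges_mon [::] = [ffun=> 0] :> mon n.
Proof. by apply/ffunP => k; rewrite !ffunE big_nil. Qed.

Lemma edges_mon_cons n (e : 'I_n * 'I_n) es k :
  edges_mon (e :: es) k = (e.1 == k) + (e.2 == k) + edges_mon es k.
Proof. by rewrite !ffunE big_cons. Qed.

Section BlownWheelPowers.
Variable n : nat.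
Local Notation profile := (fibre_sum (fun i : 'I_n => wheel_class i)).

Lemma wheel_profile_degree s (v : 'I_n -> nat) :
  wheel_profile s (profile v) -> \sum_i v i = 2 * s.
Proof.
rewrite (sum_fibre_sums _ wheel_class_lt6) /wheel_profile !big_ord_recr big_ord0 /=; lia.
Qed.

Lemma wheel_profile_edges_mon es : all (fun e => blown_wheel e.1 e.2) es ->
  wheel_profile (size es) (profile (edges_mon es)).
Proof.
elim: es => [_|e es IH /= /andP [e_edge es_edges]].
  have p0 c : profile (edges_mon [::]) c = 0 by apply: big1 => i _; rewrite ffunE big_nil.
  by rewrite /wheel_profile !p0.
have pe c : profile (edges_mon (e :: es)) c =
    profile (edges_mon es) c + (wheel_class e.1 == c) + (wheel_class e.2 == c).
  by rewrite (eq_fibre_sum _ _ (edges_mon_cons e es)) !fibre_sumD !fibre_sum_delta; lia.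
rewrite (eq_wheel_profile _ pe).
exact: wheel_profile_add_edge (wheel_class_lt6 _) (wheel_class_lt6 _) e_edge (IH es_edges).
Qed.

Lemma edges_mon_of_wheel_profile s (v : mon n) : wheel_profile s (profile v) ->
  exists2 es : seq ('I_n * 'I_n),
    size es = s /\ all (fun e => blown_wheel e.1 e.2) es & edges_mon es = v.
Proof.
elim: s v => [|s IH] v vs.
  exists [::]; rewrite // edges_mon_nil; apply/ffunP => i; rewrite ffunE.
  have /eqP := wheel_profile_degree vs.
  by rewrite muln0 sum_nat_eq0 => /forallP/(_ i)/eqP.
have [x [y /and4P [xy x_gt0 y_gt0 p's]]] := wheel_profile_peel vs.
have [a ax a_gt0] := fibre_sum_gt0 x_gt0.
have [b bx b_gt0] := fibre_sum_gt0 y_gt0.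
have ab : a != b by apply: contraTneq xy => aEb; rewrite -ax -bx aEb wheel_edge_irr.
pose v' : mon n := [ffun i => v i - (a == i) - (b == i)].
have vE i : v i = v' i + (a == i) + (b == i).
  rewrite ffunE; case: (eqVneq a i) => [<-|_].
    by move: ab; rewrite eq_sym => /negbTE ->; lia.
  by case: (eqVneq b i) => [<-|_] /=; lia.
have v's : wheel_profile s (profile v').
  rewrite (eq_wheel_profile _ (q := fun c => profile v c - (x == c) - (y == c))) // => c.
  by rewrite (eq_fibre_sum _ _ vE) !fibre_sumD !fibre_sum_delta ax bx; lia.
have [es [es_size es_edges] es_mon] := IH v' v's.
exists ((a, b) :: es); first by rewrite /= es_size /blown_wheel ax bx xy es_edges.
by apply/ffunP => i; rewrite edges_mon_cons es_mon vE /=; lia.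
Qed.

Lemma edge_ideal_pow_blown_wheel s (m : mon n) :
  edge_ideal_pow (@blown_wheel n) s m <->
  exists2 v : mon n, wheel_profile s (profile v) & mdvd v m.
Proof.
split => [[es [<- es_edges esm]] | [v vs vm]].
  by exists (edges_mon es) => //; apply: wheel_profile_edges_mon.
by have [es [es_size es_edges] vE] := edges_mon_of_wheel_profile vs; exists es; rewrite vE.
Qed.

Lemma min_gen_blown_wheel s (m : mon n) :
  min_gen (edge_ideal_pow (@blown_wheel n) s) m <-> wheel_profile s (profile m).
Proof.
apply: (min_gen_equidegree (P := fun v => wheel_profile s (profile v)) (d := 2 * s)).
  exact: edge_ideal_pow_blown_wheel.
exact: wheel_profile_degree.
Qed.

Definition blown_key s (v : mon n) : seqlexi nat *l n.-tuplelexi nat :=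
  (profile_key s (profile v), mtuple v).

Lemma blown_key_inj s : injective (blown_key s).
Proof. by move=> u v /(congr1 snd); apply: mtuple_inj. Qed.

Lemma blown_wheel_exchange s (u g : mon n) : 2 <= s ->
  wheel_profile s (profile u) -> wheel_profile s (profile g) ->
  (blown_key s u < blown_key s g)%O ->
  exists l b, [/\ u l < g l, 0 < u b, wheel_profile s (profile (mshift u l b)) &
                  (blown_key s u < blown_key s (mshift u l b))%O].
Proof.
move=> s2 us gs; rewrite /blown_key ltxi_pair.
case: (ltgtP (profile_key s (profile u)) (profile_key s (profile g))) => //=
  [key_lt _ | key_eq mtuple_lt].
  have [x [y [pq py ps key_lt']]] := exists_profile_exchange s2 us gs key_lt.
  have [l lE ugl] := fibre_sum_ltn pq.
  have [b bE ub] := fibre_sum_gt0 py.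
  have shiftE c : profile (mshift u l b) c = pshift (profile u) x y c.
    by rewrite fibre_sum_mshift // lE bE.
  exists l, b; rewrite ltxi_pair (eq_wheel_profile _ shiftE) (eq_profile_key _ shiftE).
  by rewrite (ltW key_lt') (lt_geF key_lt').
have same_sums i : profile u (wheel_class i) = profile g (wheel_class i).
  exact: profile_key_inj us gs key_eq _ (wheel_class_lt6 i).
have [l [b [ugl ub lb mtuple_lt']]] := fibre_exchange same_sums mtuple_lt.
have shiftE c : profile (mshift u l b) c = profile u c.
  by rewrite fibre_sum_mshift // lb -/(pshift _ _ _ c) pshift_id.
by exists l, b; rewrite ltxi_pair (eq_wheel_profile _ shiftE) (eq_profile_key _ shiftE) lexx.
Qed.

Lemma linear_quotients_blown_wheel s :
  2 <= s -> linear_quotients (edge_ideal_pow (@blown_wheel n) s).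
Proof.
move=> s2; set gens := [seq v : mon n <- bounded_mons n (2 * s) | wheel_profile s (profile v)].
have mem_gens v : (v \in gens) = wheel_profile s (profile v).
  rewrite mem_filter mem_bounded_mons andb_idr // => vs; apply/forallP => i.
  by rewrite -(wheel_profile_degree vs) (bigD1 i) //= leq_addr.
pose key_ge u v := (blown_key s v <= blown_key s u)%O.
have key_total : total key_ge by move=> u v; exact: le_total.
apply: (linear_quotients_by_key (key := blown_key s) (L := sort key_ge gens)).
- apply: sorted_strict_key; last exact: sort_sorted.
    by rewrite sort_uniq filter_uniq ?uniq_bounded_mons.
  by move=> u v _ _; apply: blown_key_inj.
- by move=> m; rewrite mem_sort mem_gens min_gen_blown_wheel.
move=> u g; rewrite !mem_sort !mem_gens => us gs ug.
have [l [b [ugl ub shift_s key_lt]]] := blown_wheel_exchange s2 us gs ug.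
exists l => //; exists (mshift u l b); last exact: mshift_dvd.
by rewrite mem_filter key_lt mem_sort mem_gens.
Qed.

End BlownWheelPowers.

Theorem theorem5p7 : forall n : nat, 7 <= n ->
  exists G : rel 'I_n,
    simple_graph G /\ CDCC G /\
    forall s : nat, 2 <= s -> linear_quotients (edge_ideal_pow G s).
Proof.
move=> n n7; exists (@blown_wheel n); split; first exact: blown_wheel_simple.
split; first exact: blown_wheel_CDCC.
by move=> s s2; apply: linear_quotients_blown_wheel.
Qed.
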